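(* Let $\mathcal{X}_{k-1}\subset\mathbb{R}^n$ and $\mathcal{W}_{k-1}\subset\mathbb{R}^q$ be constrained zonotopes and $u_{k-1}\in\mathbb{R}^p$ a fixed vector. Let $f:\mathbb{R}^n\times\mathbb{R}^p\times\mathbb{R}^q\to\mathbb{R}^n$ and write it as $\varrho^{\rm f}:\mathbb{R}^{n+p+q}\to\mathbb{R}^n$, $\varrho^{\rm f}(z)=f(x,u,w)$ for $z=[x^\top\ u^\top\ w^\top]^\top$. Let $\mathcal{Z}_{k-1}=\mathcal{X}_{k-1}\times\{u_{k-1}\}\times\mathcal{W}_{k-1}$, let $\mathcal{P}_{k-1}\supseteq\mathcal{Z}_{k-1}$ be a convex polytope, and suppose $\varrho^{\rm f}=\varrho^{\rm fa}-\varrho^{\rm fb}$ on $\mathcal{P}_{k-1}$ where $\varrho^{\rm fa},\varrho^{\rm fb}:\mathbb{R}^{n+p+q}\to\mathbb{R}^n$ are differentiable and componentwise convex on $\mathcal{P}_{k-1}$. Let $\bar z=[\bar x^\top\ u_{k-1}^\top\ \bar w^\top]^\top\in\mathcal{P}_{k-1}$, let $F=\nabla_z\varrho^{\rm f}(\bar z)$, $F^{\rm x}=\nabla_x\varrho^{\rm f}(\bar z)$, $F^{\rm w}=\nabla_w\varrho^{\rm f}(\bar z)$, and define the linearizations $\bar\varrho(z)=\varrho^{\rm f}(\bar z)+F(z-\bar z)$, $\bar\varrho^{\rm a}(z)=\varrho^{\rm fa}(\bar z)+\nabla_z\varrho^{\rm fa}(\bar z)(z-\bar z)$, $\bar\varrho^{\rm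 b}(z)=\varrho^{\rm fb}(\bar z)+\nabla_z\varrho^{\rm fb}(\bar z)(z-\bar z)$. For $i=1,\ldots,n$ let $$e^-_i=\min_{z\in\mathrm{vert}(\mathcal{P}_{k-1})}\big(\bar\varrho^{\rm a}_i(z)-\varrho^{\rm fb}_i(z)-\bar\varrho_i(z)\big),\qquad e^+_i=\max_{z\in\mathrm{vert}(\mathcal{P}_{k-1})}\big(\varrho^{\rm fa}_i(z)-\bar\varrho^{\rm b}_i(z)-\bar\varrho_i(z)\big),$$ and let $\mathcal{R}_{k-1}$ be the zonotope $\{\mathrm{diag}(\tfrac12(e^+-e^-)),\tfrac12(e^-+e^+)\}$, i.e. the box $[e^-,e^+]$. Then $$\{f(x,u_{k-1},w):x\in\mathcal{X}_{k-1},\ w\in\mathcal{W}_{k-1}\}\subseteq\mathcal{X}_{k|k-1}:=\big(\varrho^{\rm f}(\bar z)-F^{\rm x}\bar x-F^{\rm w}\bar w\big)\oplus F^{\rm x}\mathcal{X}_{k-1}\oplus F^{\rm w}\mathcal{W}_{k-1}\oplus\mathcal{R}_{k-1},$$ and $\mathcal{X}_{k|k-1}$ is a constrained zonotope.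
   Context: A constrained zonotope (CZ) is a set $\{G,c,A,b\}=\{G\xi+c:\xi\in[-1,1]^{n_g},\ A\xi=b\}$ with $G\in\mathbb{R}^{n\times n_g}$, $c\in\mathbb{R}^n$, $A\in\mathbb{R}^{n_h\times n_g}$, $b\in\mathbb{R}^{n_h}$; a zonotope $\{G,c\}$ has no equality constraints. $\oplus$ denotes Minkowski sum (a vector is treated as a singleton), $L\mathcal{X}=\{Lx:x\in\mathcal{X}\}$, $\times$ is the Cartesian product, and $\mathrm{vert}(\mathcal{P})$ is the (finite) vertex set of a polytope $\mathcal{P}$. For a vector-valued function, ''convex'' means each component is convex; $\nabla_x$ denotes the Jacobian with respect to the block $x$ of the argument. *)

From HB Require Import structures.
From mathcomp Require Import all_boot all_order all_algebra.
From mathcomp Require Import all_classical all_reals all_analysis.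
Set Implicit Arguments. Unset Strict Implicit. Unset Printing Implicit Defensive.
Import Order.TTheory GRing.Theory Num.Theory.
Import numFieldNormedType.Exports.
Local Open Scope classical_set_scope.
Local Open Scope ring_scope.

Record CZ (R : realType) (n : nat) := MkCZ {
  cz_ng : nat;
  cz_nh : nat;
  cz_G : 'M[R]_(n, cz_ng);
  cz_c : 'cV[R]_n;
  cz_A : 'M[R]_(cz_nh, cz_ng);
  cz_b : 'cV[R]_cz_nh }.

Definition czset (R : realType) (n : nat) (Z : CZ R n) : set 'cV[R]_n :=
  [set cz_G Z *m xi + cz_c Z | xi in
     [set xi : 'cV[R]_(cz_ng Z) | (forall j, -1 <= xi j 0 <= 1) /\ cz_A Z *m xi = cz_b Z]].

Definition zonotope (R : realType) (n ng : nat) (G : 'M[R]_(n, ng)) (c : 'cV[R]_n) : CZ R n :=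
  @MkCZ R n ng 0 G c 0 0.

Definition mink_sum (R : realType) (n : nat) (A B : set 'cV[R]_n) : set 'cV[R]_n :=
  [set a + b | a in A & b in B].
Definition lin_img (R : realType) (m n : nat) (L : 'M[R]_(m, n)) (A : set 'cV[R]_n) : set 'cV[R]_m :=
  [set L *m a | a in A].

Definition conv_hull (R : realType) (N : nat) (S : set 'cV[R]_N) : set 'cV[R]_N :=
  [set x | exists (m : nat) (lam : 'I_m -> R) (v : 'I_m -> 'cV[R]_N),
     (forall i, 0 <= lam i) /\ \sum_(i < m) lam i = 1 /\ (forall i, S (v i)) /\
     x = \sum_(i < m) lam i *: v i].

Definition polytope (R : realType) (N : nat) (P : set 'cV[R]_N) : Prop :=
  exists V : seq 'cV[R]_N, P = conv_hull [set` V].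

Definition vert (R : realType) (N : nat) (P : set 'cV[R]_N) : set 'cV[R]_N :=
  [set z | P z /\ forall z1 z2 (t : R), P z1 -> P z2 -> 0 < t < 1 ->
              z = t *: z1 + (1 - t) *: z2 -> z1 = z2].

Definition cw_convex_on (R : realType) (N n : nat) (g : 'cV[R]_N -> 'cV[R]_n)
    (P : set 'cV[R]_N) : Prop :=
  forall (i : 'I_n) z1 z2 (t : R), P z1 -> P z2 -> 0 <= t <= 1 ->
    g (t *: z1 + (1 - t) *: z2) i 0 <= t * g z1 i 0 + (1 - t) * g z2 i 0.

Definition jac (R : realType) (N n : nat) (g : 'cV[R]_N -> 'cV[R]_n) (z : 'cV[R]_N)
    : 'M[R]_(n, N) :=
  \matrix_(i < n, j < N) ('d g z (delta_mx j 0)) i 0.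

(* Convexity gives fa >= its linearization and fb >= its linearization on P,
   so on P the linearization error rho - rbar = fa - fb - rbar lies between a
   concave and a convex function, each a convex function plus affine maps.
   A convex function on a polytope is bounded by its values at the vertices
   (a polytope is the hull of its vertices, because a generator that is not
   extreme can be dropped), hence the error lies in the box [em, ep] on all of
   P, which contains every z = (x, u, w).  Since rbar z is the constant
   rho zbar - Fx xbar - Fw wbar plus Fx x + Fw w, f x u w = rbar z + error is
   in the Minkowski sum; constrained zonotopes are closed under points,
   linear images and Minkowski sums. *)

From HB Require Import structures.
From mathcomp Require Import all_boot all_order all_algebra.
From mathcomp Require Import all_classical all_reals all_analysis.
From mathcomp Require Import ring lra.
Set Implicit Arguments. Unset Strict Implicit. Unset Printing Implicit Defensive.
Import Order.TTheory GRing.Theory Num.Theory.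
Import numFieldNormedType.Exports.
Local Open Scope classical_set_scope.
Local Open Scope ring_scope.

Section ConvexHull.
Variables (R : realType) (N : nat).
Implicit Types (C S : set 'cV[R]_N) (x y z : 'cV[R]_N).

Definition is_convex C := forall x y (s : R), C x -> C y -> 0 < s < 1 ->
  C (s *: x + (1 - s) *: y).

Definition convex_on (P : set 'cV[R]_N) (phi : 'cV[R]_N -> R) :=
  forall z1 z2 (t : R), P z1 -> P z2 -> 0 <= t <= 1 ->
    phi (t *: z1 + (1 - t) *: z2) <= t * phi z1 + (1 - t) * phi z2.

Lemma convex_comb C x y (a : R) : is_convex C -> 0 <= a <= 1 ->
  (0 < a -> C x) -> (a < 1 -> C y) -> C (a *: x + (1 - a) *: y).
Proof.
move=> cC /andP[a0 a1] Cx Cy.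
have [a0_eq|an0] := eqVneq a 0.
  by subst a; rewrite scale0r add0r subr0 scale1r; apply: Cy; exact: ltr01.
have [a1_eq|an1] := eqVneq a 1.
  by subst a; rewrite subrr scale0r addr0 scale1r; apply: Cx; exact: ltr01.
have a_gt0 : 0 < a by rewrite lt_neqAle eq_sym an0.
have a_lt1 : a < 1 by rewrite lt_neqAle an1.
by apply: cC; [exact: Cx | exact: Cy | rewrite a_gt0].
Qed.

Lemma subset_conv_hull S : S `<=` conv_hull S.
Proof.
move=> x Sx; exists 1%N, (fun=> 1), (fun=> x).
by rewrite !big_ord1 scale1r.
Qed.

Lemma conv_hull_sub C S : is_convex C -> S `<=` C -> conv_hull S `<=` C.
Proof.
move=> cC SC x [m [lam [v [lam_ge0 [lam_sum1 [Sv ->]]]]]].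
elim: m lam v lam_ge0 lam_sum1 Sv => [|m IH] lam v lam_ge0 lam_sum1 Sv.
  by move: lam_sum1; rewrite big_ord0 => /eqP; rewrite eq_sym oner_eq0.
rewrite big_ord_recr /=; rewrite big_ord_recr /= in lam_sum1.
pose w := widen_ord (leqnSn m).
set s := \sum_(i < m) lam (w i) in lam_sum1 *.
have s_ge0 : 0 <= s by apply: sumr_ge0 => i _; exact: lam_ge0.
have lam_last : lam ord_max = 1 - s by rewrite -lam_sum1 addrAC subrr add0r.
have [s0|s_neq0] := eqVneq s 0.
  have lam0 := psumr_eq0P (fun i _ => lam_ge0 (w i)) s0.
  rewrite big1 ?add0r; last by move=> i _; rewrite lam0 // scale0r.
  by rewrite lam_last s0 subr0 scale1r; exact: SC.
set y := \sum_(i < m) (lam (w i) / s) *: v (w i).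
have -> : \sum_(i < m) lam (w i) *: v (w i) = s *: y.
  by rewrite /y scaler_sumr; apply: eq_bigr => i _; rewrite scalerA mulrCA divff ?mulr1.
rewrite lam_last; apply: convex_comb => //.
- by rewrite s_ge0 -lam_sum1 lerDl lam_ge0.
- move=> _; apply: IH => [i||i]; last exact: Sv.
    by rewrite divr_ge0 ?lam_ge0.
  by rewrite -mulr_suml divff.
- by move=> _; exact/SC/Sv.
Qed.

Lemma convex_conv_hull S : is_convex (conv_hull S).
Proof.
move=> _ _ s [m1 [l1 [v1 [l1_ge0 [l1_sum [Sv1 ->]]]]]]
  [m2 [l2 [v2 [l2_ge0 [l2_sum [Sv2 ->]]]]]] /andP[s_gt0 s_lt1].
pose pick T (a : 'I_m1 -> T) (b : 'I_m2 -> T) (k : 'I_(m1 + m2)) :=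
  match fintype.split k with inl i => a i | inr j => b j end.
exists (m1 + m2)%N, (pick _ (fun i => s * l1 i) (fun j => (1 - s) * l2 j)).
exists (pick _ v1 v2).
have pick_l T a b (i : 'I_m1) : pick T a b (lshift m2 i) = a i.
  by rewrite /pick (unsplitK (inl _ i)).
have pick_r T a b (j : 'I_m2) : pick T a b (rshift m1 j) = b j.
  by rewrite /pick (unsplitK (inr _ j)).
split.
  by move=> k; rewrite /pick; case: fintype.split => i; rewrite mulr_ge0 // ?subr_ge0 ltW.
split.
  rewrite big_split_ord; under eq_bigr do rewrite pick_l.
  under [X in _ + X = _]eq_bigr do rewrite pick_r.
  by rewrite -!mulr_sumr l1_sum l2_sum !mulr1 addrC subrK.
split; first by move=> k; rewrite /pick; case: fintype.split => i.
rewrite big_split_ord !scaler_sumr; congr (_ + _); apply: eq_bigr => i _;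
  by rewrite ?pick_l ?pick_r scalerA.
Qed.

Lemma vert_subset A B x : A `<=` B -> A x -> vert B x -> vert A x.
Proof. by move=> AB Ax [_ ext]; split=> // z1 z2 t /AB Bz1 /AB Bz2; exact: ext. Qed.

Lemma vert_conv_hull_range m (v : 'I_m -> 'cV[R]_N) :
  vert (conv_hull (range v)) `<=` range v.
Proof.
move=> x [Px ext]; apply: contrapT => x_notin.
pose C := [set y | conv_hull (range v) y /\ y <> x].
have cC : is_convex C.
  move=> y1 y2 s [P1 y1x] [P2 y2x] s01; split; first exact: convex_conv_hull.
  move=> E; have y12 := ext _ _ _ P1 P2 s01 (esym E).
  by apply: y1x; rewrite -E -y12 -scalerDl addrC subrK scale1r.
have vC : range v `<=` C.
  move=> _ [j _ <-]; split; first by apply: subset_conv_hull; exists j.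
  by move=> vx; apply: x_notin; exists j.
by have [] := conv_hull_sub cC vC Px.
Qed.

(* [conv_join C v] is the convex hull of [C] and [v] when [C] is convex; the
   guard [a < 1 -> C y] lets [C] be empty. *)
Definition conv_join C (v : 'cV[R]_N) := [set z | exists a y,
  0 <= a <= 1 /\ (a < 1 -> C y) /\ z = a *: v + (1 - a) *: y].

Lemma conv_joinv C v : conv_join C v v.
Proof. by exists 1, v; rewrite lexx ler01 ltxx subrr scale0r addr0 scale1r. Qed.

Lemma conv_join_comb C v z1 z2 (t : R) : is_convex C ->
  conv_join C v z1 -> conv_join C v z2 -> 0 < t < 1 ->
  (z1 = v /\ z2 = v) \/
  exists c w, [/\ 0 <= c < 1, C w & t *: z1 + (1 - t) *: z2 = c *: v + (1 - c) *: w].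
Proof.
move=> cC [a [y1 [/andP[a0 a1] [Cy1 ->]]]] [b [y2 [/andP[b0 b1] [Cy2 ->]]]] /andP[t0 t1].
pose c := t * a + (1 - t) * b.
have c_ge0 : 0 <= c by rewrite /c; nra.
have [c1|c_neq1] := eqVneq c 1.
  have [-> ->] : a = 1 /\ b = 1 by move: c1; rewrite /c => c1; split; nra.
  by left; rewrite subrr !scale0r !addr0 !scale1r.
have c_lt1 : c < 1 by rewrite lt_neqAle c_neq1 /c /=; nra.
have c'_gt0 : 0 < 1 - c by rewrite subr_gt0.
(* Split the weight [1 - c] of the [y]-part between [y1] and [y2]. *)
pose al := t * (1 - a) / (1 - c).
have one_sub_al : 1 - al = (1 - t) * (1 - b) / (1 - c).
  by rewrite /al /c; field; rewrite -/c gt_eqF.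
right; exists c, (al *: y1 + (1 - al) *: y2); split.
- by rewrite c_ge0.
- apply: convex_comb => //.
  + rewrite divr_ge0 ?(ltW c'_gt0) ?mulr_ge0 ?subr_ge0 ?(ltW t0) //=.
    by rewrite -subr_ge0 one_sub_al divr_ge0 ?(ltW c'_gt0) ?mulr_ge0 ?subr_ge0 ?(ltW t1).
  + move=> al_gt0; apply: Cy1; rewrite lt_neqAle a1 andbT.
    apply: contraTneq al_gt0 => a_eq1.
    by rewrite /al a_eq1 subrr mulr0 mul0r ltxx.
  + move=> al_lt1; apply: Cy2; rewrite lt_neqAle b1 andbT.
    apply: contraTneq al_lt1 => b_eq1; rewrite -subr_gt0 one_sub_al b_eq1.
    by rewrite subrr mulr0 mul0r ltxx.
- apply/matrixP => i k; rewrite !mxE one_sub_al /al /c.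
  by field; rewrite -/c gt_eqF.
Qed.

Lemma convex_conv_join C v : is_convex C -> is_convex (conv_join C v).
Proof.
move=> cC x y s Jx Jy s01.
have [[-> ->]|[c [w [/andP[c0 c1] Cw ->]]]] := conv_join_comb cC Jx Jy s01.
  by rewrite -scalerDl addrC subrK scale1r; exact: conv_joinv.
by exists c, w; rewrite c0 ltW.
Qed.

Lemma vert_conv_join C v : is_convex C -> ~ C v -> vert (conv_join C v) v.
Proof.
move=> cC Cv; split=> [|z1 z2 t J1 J2 t01 v_eq]; first exact: conv_joinv.
have [[-> ->] //|[c [w [/andP[_ c1] Cw E]]]] := conv_join_comb cC J1 J2 t01.
have {}E : v = c *: v + (1 - c) *: w by rewrite -E.
suff v_eq_w : v = w by case: Cv; rewrite v_eq_w.
apply/matrixP => i k; have /eqP := congr1 (fun M : 'cV_N => M i k) E.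
rewrite !mxE -subr_eq0 => /eqP Eik.
have : (1 - c) * (v i k - w i k) = 0 by rewrite -Eik; ring.
by move/eqP; rewrite mulf_eq0 subr_eq0 eq_sym (lt_eqF c1) subr_eq0 /= => /eqP.
Qed.

Lemma conv_hull_remove m (v : 'I_m.+1 -> 'cV[R]_N) j :
  ~ vert (conv_hull (range v)) (v j) ->
  conv_hull (range v) = conv_hull (range (v \o lift j)).
Proof.
move=> v_nvert.
have cC' := @convex_conv_hull (range (v \o lift j)).
set P := conv_hull (range v); set C' := conv_hull _ in cC' *.
have PJ : P `<=` conv_join C' (v j).
  apply: conv_hull_sub; first exact: convex_conv_join.
  move=> _ [k _ <-]; case: (unliftP j k) => [k' ->|->]; last exact: conv_joinv.
  exists 0, (v (lift j k')).
  split; first by rewrite lexx ler01.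
  split; first by move=> _; apply: subset_conv_hull; exists k'.
  by rewrite scale0r add0r subr0 scale1r.
(* Otherwise [v j] would be a vertex of [conv_join C' (v j)], hence of [P]. *)
have C'vj : C' (v j).
  apply: contrapT => C'vj; apply: v_nvert.
  by apply: vert_subset PJ _ (vert_conv_join cC' C'vj); apply: subset_conv_hull; exists j.
apply/seteqP; split.
  by move=> x /PJ [a [y [a01 [C'y ->]]]]; apply: convex_comb.
apply: conv_hull_sub; first exact: convex_conv_hull.
by move=> _ [k _ <-]; apply: subset_conv_hull; exists (lift j k).
Qed.

Lemma conv_hull_vert_family m (v : 'I_m -> 'cV[R]_N) :
  exists m' (v' : 'I_m' -> 'cV[R]_N), conv_hull (range v) = conv_hull (range v') /\
    forall j, vert (conv_hull (range v)) (v' j).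
Proof.
elim: m v => [|m IH] v; first by exists 0%N, v; split => // -[].
have [v_vert|/existsNP [j v_nvert]] := pselect (forall j, vert (conv_hull (range v)) (v j)).
  by exists m.+1, v.
have [m' [v' [E' v'_vert]]] := IH (v \o lift j).
by exists m', v'; rewrite (conv_hull_remove v_nvert).
Qed.

Lemma range_nth (V : seq 'cV[R]_N) : [set` V] = range (fun i : 'I_(size V) => nth 0 V i).
Proof.
apply/seteqP; split=> [x /= xV|_ [i _ <-] /=]; last exact: mem_nth.
have xi : (index x V < size V)%N by rewrite index_mem.
by exists (Ordinal xi) => //=; rewrite nth_index.
Qed.

Lemma polytope_vert P : polytope P ->
  exists m (v : 'I_m -> 'cV[R]_N), P = conv_hull (range v) /\ vert P = range v.
Proof.
move=> [V ->]; rewrite range_nth.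
have [m [v [E v_vert]]] := conv_hull_vert_family (fun i : 'I_(size V) => nth 0 V i).
exists m, v; rewrite E; split => //; apply/seteqP; split; first exact: vert_conv_hull_range.
by move=> _ [j _ <-]; rewrite -E.
Qed.

Lemma convex_on_le_range m (v : 'I_m -> 'cV[R]_N) phi z :
  convex_on (conv_hull (range v)) phi -> conv_hull (range v) z ->
  exists j, phi z <= phi (v j).
Proof.
move=> cvx Pz; apply: contrapT => /forallNP phi_lt.
pose C := [set y | conv_hull (range v) y /\ phi y < phi z].
have cC : is_convex C.
  move=> y1 y2 s [P1 lt1] [P2 lt2] /andP[s0 s1].
  split; first by apply: convex_conv_hull; rewrite ?s0.
  apply: le_lt_trans (cvx _ _ _ P1 P2 _) _; first by rewrite !ltW.
  nra.
have vC : range v `<=` C.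
  move=> _ [j _ <-]; split; first by apply: subset_conv_hull; exists j.
  by rewrite ltNge; apply/negP; exact: phi_lt.
by have [_] := conv_hull_sub cC vC Pz; rewrite ltxx.
Qed.

Lemma polytope_le_sup_vert P phi z : polytope P -> convex_on P phi -> P z ->
  phi z <= sup [set phi w | w in vert P].
Proof.
move=> /polytope_vert [m [v [-> ->]]] cvx Pz.
have [j le_j] := convex_on_le_range cvx Pz.
apply: le_trans le_j (ub_le_sup _ _); last by exists (v j) => //; exists j.
exists (\sum_k `|phi (v k)|) => _ [_ [k _ <-] <-].
by rewrite (le_trans (ler_norm _)) // (bigD1 k) //= lerDl sumr_ge0.
Qed.

Lemma polytope_inf_vert_le P phi z : polytope P ->
  convex_on P (fun w => - phi w) -> P z -> inf [set phi w | w in vert P] <= phi z.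
Proof.
move=> polyP cvx Pz; rewrite /inf image_comp lerNl.
exact: polytope_le_sup_vert.
Qed.

End ConvexHull.

Section Linearization.
Variables (R : realType) (N n : nat).
Implicit Types (g h : 'cV[R]_N -> 'cV[R]_n) (P : set 'cV[R]_N) (z zb : 'cV[R]_N).

Definition linearization g zb z := g zb + jac g zb *m (z - zb).

Definition affine h := forall z1 z2 (t : R),
  h (t *: z1 + (1 - t) *: z2) = t *: h z1 + (1 - t) *: h z2.

Lemma mul_jac g z (d : 'cV[R]_N) : jac g z *m d = 'd g z d.
Proof.
apply/matrixP => i k; rewrite (ord1 k) !mxE.
rewrite {2}(matrix_sum_delta d) linear_sum summxE; apply: eq_bigr => j _.
by rewrite big_ord1 linearZ !mxE /= mulrC.
Qed.

(* The difference quotients of [g] along [z - zb] at [zb] are, by convexity on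
   the segment, bounded by [g z - g zb]; so is their limit. *)
Lemma linearization_le g P zb z i : differentiable g zb -> cw_convex_on g P ->
  P zb -> P z -> linearization g zb z i 0 <= g z i 0.
Proof.
move=> dg cvx Pzb Pz; rewrite /linearization mul_jac mxE -lerBrDl.
set d := z - zb; rewrite -(deriveE _ dg).
have quot_cvg :
    (fun h : R => h^-1 *: ((g \o shift zb) (h *: d) - g zb)) @ 0^'+ --> 'D_d g zb.
  exact/cvg_dnbhs_at_right/diff_derivable.
have closed_half : closed [set M : 'cV[R]_n | M i 0 <= g z i 0 - g zb i 0].
  apply: (@preimage_closed _ _ (fun M : 'cV[R]_n => M i 0) [set x | x <= _]).
    by move=> M _; exact: coord_continuous.
  exact: closed_le.
apply: (closed_cvg _ closed_half _ _ quot_cvg); near=> h.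
have h_gt0 : 0 < h by near: h; exact: nbhs_right_gt.
have h_lt1 : h < 1 by near: h; exact: nbhs_right_lt ltr01.
rewrite /= !mxE.
have -> : h *: d + zb = h *: z + (1 - h) *: zb by apply/matrixP => a b; rewrite !mxE; ring.
have := cvx i z zb h Pz Pzb; rewrite (ltW h_gt0) (ltW h_lt1) => /(_ isT) segment_le.
by rewrite ler_pdivrMl // mulrBr; lra.
Unshelve. all: by end_near.
Qed.

Lemma linearization_affine g zb : affine (linearization g zb).
Proof.
move=> z1 z2 t; rewrite /linearization.
have -> : t *: z1 + (1 - t) *: z2 - zb = t *: (z1 - zb) + (1 - t) *: (z2 - zb).
  by apply/matrixP => a b; rewrite !mxE; ring.
by rewrite mulmxDr -!scalemxAr; apply/matrixP => a b; rewrite !mxE; ring.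
Qed.

Lemma affineD h1 h2 : affine h1 -> affine h2 -> affine (h1 \+ h2).
Proof.
move=> a1 a2 z1 z2 t; rewrite /= a1 a2.
by apply/matrixP => a b; rewrite !mxE; ring.
Qed.

Lemma affineN h : affine h -> affine (fun z => - h z).
Proof. by move=> ah z1 z2 t; rewrite ah !scalerN opprD. Qed.

Lemma convex_on_eq P (phi psi : 'cV[R]_N -> R) :
  (forall z, phi z = psi z) -> convex_on P phi -> convex_on P psi.
Proof. by move=> e cvx z1 z2 t; rewrite -!e; exact: cvx. Qed.

Lemma convex_onD_affine P phi h i : convex_on P phi -> affine h ->
  convex_on P (fun z => phi z + h z i 0).
Proof.
move=> cvx ah z1 z2 t P1 P2 t01; rewrite ah !mxE.
have := cvx _ _ _ P1 P2 t01; lra.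
Qed.

Lemma affine_minorant_error_bounds P (rho fa fb la lb lr : 'cV[R]_N -> 'cV[R]_n) z i :
  polytope P -> (forall w, P w -> rho w = fa w - fb w) ->
  cw_convex_on fa P -> cw_convex_on fb P -> affine la -> affine lb -> affine lr ->
  la z i 0 <= fa z i 0 -> lb z i 0 <= fb z i 0 -> P z ->
  inf [set (la w - fb w - lr w) i 0 | w in vert P] <= (rho z - lr z) i 0 <=
  sup [set (fa w - lb w - lr w) i 0 | w in vert P].
Proof.
move=> polyP rhoE cva cvb ala alb alr la_le lb_le Pz.
rewrite rhoE //; apply/andP; split.
  apply: le_trans (polytope_inf_vert_le polyP _ Pz) _; last by rewrite !mxE; lra.
  apply: convex_on_eq (convex_onD_affine i (cvb i) (affineD alr (affineN ala))) => w.
  by rewrite !mxE; lra.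
apply: le_trans (polytope_le_sup_vert polyP _ Pz); first by rewrite !mxE; lra.
apply: convex_on_eq (convex_onD_affine i (cva i) (affineN (affineD alb alr))) => w.
by rewrite !mxE; lra.
Qed.

End Linearization.

Section ConstrainedZonotopes.
Variable R : realType.

Lemma cz_set1 n (c : 'cV[R]_n) : exists C : CZ R n, czset C = [set c].
Proof.
exists (@MkCZ R n 0 0 0 c 0 0); apply/seteqP; split.
  by move=> _ [xi _ <-] /=; rewrite mul0mx add0r.
move=> _ -> /=; exists 0; last by rewrite mul0mx add0r.
by split=> [[]|]; rewrite ?mulmx0.
Qed.

Lemma cz_lin_img m n (L : 'M[R]_(m, n)) (X : CZ R n) :
  exists C : CZ R m, czset C = lin_img L (czset X).
Proof.
case: X => ng nh G c A b; exists (MkCZ (L *m G) (L *m c) A b).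
apply/seteqP; split=> [_ [xi Hxi <-]|_ [_ [xi Hxi <-] <-]] /=.
  by exists (G *m xi + c); [exists xi | rewrite mulmxDr mulmxA].
by exists xi => //; rewrite mulmxDr mulmxA.
Qed.

Lemma unit_box_col_mx a b (x1 : 'cV[R]_a) (x2 : 'cV[R]_b) :
  (forall j, -1 <= col_mx x1 x2 j 0 <= 1) <->
  (forall j, -1 <= x1 j 0 <= 1) /\ (forall j, -1 <= x2 j 0 <= 1).
Proof.
split=> [box|[box1 box2] j].
  by split=> j; [have := box (lshift b j) | have := box (rshift a j)];
    rewrite (col_mxEu, col_mxEd).
by rewrite -(splitK j); case: fintype.split => k; rewrite (col_mxEu, col_mxEd).
Qed.

Lemma cz_mink_sum n (X Y : CZ R n) :
  exists C : CZ R n, czset C = mink_sum (czset X) (czset Y).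
Proof.
case: X Y => ng1 nh1 G1 c1 A1 b1 [ng2 nh2 G2 c2 A2 b2].
exists (MkCZ (row_mx G1 G2) (c1 + c2) (block_mx A1 0 0 A2) (col_mx b1 b2)).
apply/seteqP; split=> [_ [xi [box HA] <-] /=|].
  rewrite -(vsubmxK xi) in box HA *.
  move/unit_box_col_mx: box => [box1 box2].
  move: HA; rewrite mul_block_col !mul0mx addr0 add0r => /eq_col_mx [HA1 HA2].
  exists (G1 *m usubmx xi + c1); first by exists (usubmx xi).
  exists (G2 *m dsubmx xi + c2); first by exists (dsubmx xi).
  by rewrite mul_row_col addrACA.
move=> _ [_ [xi1 [box1 HA1] <-] [_ [xi2 [box2 HA2] <-] <-]] /=.
exists (col_mx xi1 xi2); last by rewrite mul_row_col addrACA.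
split; first exact/unit_box_col_mx.
by rewrite mul_block_col !mul0mx addr0 add0r HA1 HA2.
Qed.

Definition box_zonotope n (em ep : 'cV[R]_n) :=
  zonotope (diag_mx ((2^-1 *: (ep - em))^T)) (2^-1 *: (em + ep)).

Lemma czset_box_zonotope n (em ep e : 'cV[R]_n) :
  (forall i, em i 0 <= e i 0 <= ep i 0) -> czset (box_zonotope em ep) e.
Proof.
move=> box.
pose xi := \col_j (if ep j 0 - em j 0 == 0 then 0
                   else (2 * e j 0 - em j 0 - ep j 0) / (ep j 0 - em j 0)).
exists xi.
  split=> [j|]; last by rewrite /= mul0mx.
  have /andP[em_le le_ep] := box j; rewrite mxE.
  have [_|d_neq0] := eqVneq; first by rewrite lerN10 ler01.
  have d_gt0 : 0 < ep j 0 - em j 0.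
    by rewrite lt_neqAle eq_sym d_neq0 subr_ge0 (le_trans em_le).
  by rewrite ler_pdivlMr // ler_pdivrMr //; apply/andP; split; lra.
apply/matrixP => i k; rewrite (ord1 k) /= mul_diag_mx !mxE.
have /andP[em_le le_ep] := box i.
have [d_eq0|d_neq0] := eqVneq; first by lra.
by field.
Qed.

Lemma mulmx_sub_col_mx3 m a b c (F : 'M[R]_(m, a + (b + c))) x xb (u : 'cV[R]_b) w wb :
  F *m (col_mx x (col_mx u w) - col_mx xb (col_mx u wb)) =
  lsubmx F *m (x - xb) + rsubmx (rsubmx F) *m (w - wb).
Proof.
rewrite !opp_col_mx !add_col_mx subrr -[in LHS](hsubmxK F) -[in LHS](hsubmxK (rsubmx F)).
by rewrite !mul_row_col mulmx0 add0r.
Qed.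

End ConstrainedZonotopes.

Unset Implicit Arguments.

Theorem theorem1 (R : realType) (n p q : nat)
  (X : CZ R n) (W : CZ R q) (u : 'cV[R]_p)
  (f : 'cV[R]_n -> 'cV[R]_p -> 'cV[R]_q -> 'cV[R]_n)
  (P : set 'cV[R]_(n + (p + q)))
  (fa fb : 'cV[R]_(n + (p + q)) -> 'cV[R]_n)
  (xbar : 'cV[R]_n) (wbar : 'cV[R]_q) :
  let rho := fun z : 'cV[R]_(n + (p + q)) =>
    f (usubmx z) (usubmx (dsubmx z)) (dsubmx (dsubmx z)) in
  let Z := [set col_mx x (col_mx u w) | x in czset X & w in czset W] in
  let zbar := col_mx xbar (col_mx u wbar) in
  let F := jac rho zbar in
  let Fx : 'M[R]_(n, n) := lsubmx F in
  let Fw : 'M[R]_(n, q) := rsubmx (rsubmx F : 'M[R]_(n, p + q)) in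
  let rbar := fun z => rho zbar + F *m (z - zbar) in
  let rbara := fun z => fa zbar + jac fa zbar *m (z - zbar) in
  let rbarb := fun z => fb zbar + jac fb zbar *m (z - zbar) in
  let em : 'cV[R]_n := \col_i inf [set (rbara z - fb z - rbar z) i 0 | z in vert P] in
  let ep : 'cV[R]_n := \col_i sup [set (fa z - rbarb z - rbar z) i 0 | z in vert P] in
  let Rbox := zonotope (diag_mx ((2^-1 *: (ep - em))^T)) (2^-1 *: (em + ep)) in
  let Xpred := mink_sum (mink_sum (mink_sum (set1 (rho zbar - Fx *m xbar - Fw *m wbar))
                                (lin_img Fx (czset X)))
                          (lin_img Fw (czset W)))
                    (czset Rbox) in
  polytope P -> Z `<=` P ->
  (forall z, P z -> rho z = fa z - fb z) ->
  (forall z, P z -> differentiable fa z) ->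
  (forall z, P z -> differentiable fb z) ->
  cw_convex_on fa P -> cw_convex_on fb P ->
  P zbar ->
  [set f x u w | x in czset X & w in czset W] `<=` Xpred /\
  exists C : CZ R n, czset C = Xpred.
Proof.
move=> rho Z zbar F Fx Fw rbar rbara rbarb em ep Rbox Xpred
  polyP ZP rhoE dfa dfb cva cvb Pzbar.
set c := rho zbar - Fx *m xbar - Fw *m wbar.
split; last first.
  have [C0 E0] := cz_set1 c.
  have [CX EX] := cz_lin_img Fx X; have [CW EW] := cz_lin_img Fw W.
  have [C1 E1] := cz_mink_sum C0 CX; have [C2 E2] := cz_mink_sum C1 CW.
  have [C E] := cz_mink_sum C2 Rbox.
  by exists C; rewrite E E2 E1 E0 EX EW.
move=> _ [x Xx [w Ww <-]].
pose z := col_mx x (col_mx u w).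
have Pz : P z by apply: ZP; exists x => //; exists w.
have rho_z : rho z = f x u w by rewrite /rho /z !(col_mxKu, col_mxKd).
have rbar_z : rbar z = c + Fx *m x + Fw *m w.
  rewrite /rbar mulmx_sub_col_mx3 !mulmxBr /c -/Fx -/Fw.
  move: (rho zbar) (Fx *m x) (Fx *m xbar) (Fw *m w) (Fw *m wbar) => r a b a' b'.
  by apply/matrixP => i j; rewrite !mxE; ring.
have err_box : czset Rbox (rho z - rbar z).
  apply: czset_box_zonotope => i; rewrite [em i 0]mxE [ep i 0]mxE.
  apply: affine_minorant_error_bounds => //; try exact: linearization_affine.
  - exact: linearization_le (dfa _ Pzbar) cva Pzbar Pz.
  - exact: linearization_le (dfb _ Pzbar) cvb Pzbar Pz.
exists (c + Fx *m x + Fw *m w); last first.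
  by exists (rho z - rbar z) => //; rewrite -rbar_z -rho_z addrC subrK.
exists (c + Fx *m x); last by exists (Fw *m w) => //; exists w.
by exists c => //; exists (Fx *m x) => //; exists x.
Qed.
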